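(* Let $g:\{0,1,2,3\}^*\to\{0,1,2,3\}^*$ be the morphism $g(0)=01$, $g(1)=20$, $g(2)=23$, $g(3)=02$, and $\tau$ the coding $\tau(0)=2$, $\tau(1)=1$, $\tau(2)=0$, $\tau(3)=1$; let $\mathbf{vtm}=\tau(g^\omega(0))$, an infinite word over $\{0,1,2\}$. Let $\Delta$ be a finite alphabet and $h:\{0,1,2\}^*\to\Delta^*$ a morphism such that $h(0),h(1),h(2)$ are not all empty. If the three lengths $|h(0)|,|h(1)|,|h(2)|$ form an arithmetic progression, then the infinite word $h(\mathbf{vtm})$ is $2$-automatic.
   Context: $g^\omega(0)$ denotes the infinite fixed point of $g$ starting with $0$. An infinite word $(a_n)_{n\ge0}$ is $2$-automatic if there is a deterministic finite automaton with output that, on input the base-$2$ representation of $n$ (most significant digit first), outputs $a_n$; equivalently, it is the image under a coding of a fixed point of a $2$-uniform morphism. *)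

From mathcomp Require Import all_boot.
Set Implicit Arguments. Unset Strict Implicit. Unset Printing Implicit Defensive.

Definition word_morph (A B : Type) (f : A -> seq B) (w : seq A) : seq B :=
  flatten (map f w).

Definition L4 (i : nat) (Hi : i < 4) : 'I_4 := Ordinal Hi.
Definition L3 (i : nat) (Hi : i < 3) : 'I_3 := Ordinal Hi.

Definition g_img (a : 'I_4) : seq 'I_4 :=
  match val a with
  | 0 => [:: @L4 0 isT; @L4 1 isT]
  | 1 => [:: @L4 2 isT; @L4 0 isT]
  | 2 => [:: @L4 2 isT; @L4 3 isT]
  | _ => [:: @L4 0 isT; @L4 2 isT]
  end.

(* g^omega(0): the n-th letter is the n-th letter of g^(n+1)(0)
   (which has length 2^(n+1) > n, and each g^k(0) is a prefix of g^(k+1)(0)). *)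
Definition g_omega0 (n : nat) : 'I_4 :=
  nth ord0 (iter n.+1 (word_morph g_img) [:: ord0]) n.

Definition tau (a : 'I_4) : 'I_3 :=
  match val a with
  | 0 => @L3 2 isT
  | 1 => @L3 1 isT
  | 2 => @L3 0 isT
  | _ => @L3 1 isT
  end.

Definition vtm (n : nat) : 'I_3 := tau (g_omega0 n).

(* y is the image h(x) of the infinite word x under the morphism h:
   every finite word h(x_0 ... x_{k-1}) is a prefix of y. *)
Definition is_morph_image (A B : Type) (h : A -> seq B) (x : nat -> A)
    (y : nat -> B) : Prop :=
  forall k n, n < size (word_morph h (mkseq x k)) ->
    y n = nth (y n) (word_morph h (mkseq x k)) n.

(* Canonical base-2 representation, most significant digit first
   (0 is represented by the empty word). *)
Fixpoint bin_aux (fuel n : nat) : seq 'I_2 :=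
  match fuel with
  | 0 => [::]
  | f.+1 => if n is 0 then [::] else rcons (bin_aux f n./2) (if odd n then ord_max else ord0)
  end.
Definition base2 (n : nat) : seq 'I_2 := bin_aux n n.

Definition automatic2 (D : Type) (y : nat -> D) : Prop :=
  exists (Q : finType) (q0 : Q) (delta : Q -> 'I_2 -> Q) (out : Q -> D),
    forall n, y n = out (foldl delta q0 (base2 n)).

From mathcomp Require Import all_boot zify.
From Stdlib Require Import ClassicalEpsilon.
Set Implicit Arguments. Unset Strict Implicit. Unset Printing Implicit Defensive.

(* Writing t for the Thue-Morse word, vtm is its first difference:
   vtm_m = 1 + t_(m+1) - t_m.  If |h(a)| = s + (a - 1) e for a = 0, 1, 2, the
   length of h(vtm_0 ... vtm_(m-1)) therefore telescopes to s m + e t_m.  Hence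
   the letter vtm_m whose image covers position n = s q + r of h(vtm) has
   m in {q - 1, q, q + 1}, and the letter at n is determined by r and the
   window t_(q-1), ..., t_(q+2).  Since t_(2k+b) = b xor t_k, these data at
   2n + b are determined by those at n: they form a congruence with finitely
   many classes for the maps n |-> 2n + b, and the classes are the states of
   an automaton reading base-2 expansions. *)

Lemma bin_aux_fuel f1 f2 n : n <= f1 -> n <= f2 -> bin_aux f1 n = bin_aux f2 n.
Proof.
elim: f1 f2 n => [|f1 IH] [|f2] [|n] //= le_n_f1 le_n_f2.
by rewrite (IH f2) // leq_uphalf_double; lia.
Qed.

Lemma base2_rcons n : 0 < n ->
  base2 n = rcons (base2 n./2) (if odd n then ord_max else ord0).
Proof.
case: n => [|n] // _; rewrite /base2 /= (@bin_aux_fuel n (uphalf n)) //.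
by rewrite leq_uphalf_double; lia.
Qed.

Lemma automatic2_of_congruence (D : Type) (Q : finType) (S : nat -> Q) (y : nat -> D) :
  (forall n1 n2 b, b < 2 -> S n1 = S n2 -> S (2 * n1 + b) = S (2 * n2 + b)) ->
  (forall n1 n2, S n1 = S n2 -> y n1 = y n2) ->
  automatic2 y.
Proof.
move=> S_double S_out.
pose rep q := epsilon (inhabits 0) (fun n => S n = q).
have S_rep n : S (rep (S n)) = S n.
  by apply: (epsilon_spec (inhabits 0) (fun m => S m = S n)); exists n.
pose delta q (b : 'I_2) := S (2 * rep q + b).
have fold_delta n : foldl delta (S 0) (base2 n) = S n.
  elim/ltn_ind: n => [[|n] IH] //.
  rewrite base2_rcons // -cats1 foldl_cat /= IH; last first.
    by rewrite ltnS leq_uphalf_double; lia.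
  rewrite /delta (S_double _ (uphalf n) _ (ltn_ord _) (S_rep _)).
  by congr S; have /= := odd_double_half n.+1; case: (odd n) => /=; lia.
exists Q, (S 0), delta, (fun q => y (rep q)) => n.
by rewrite fold_delta; apply: S_out; rewrite S_rep.
Qed.

Lemma word_morph_cat (A B : Type) (f : A -> seq B) s1 s2 :
  word_morph f (s1 ++ s2) = word_morph f s1 ++ word_morph f s2.
Proof. by rewrite /word_morph map_cat flatten_cat. Qed.

Lemma word_morph_cons (A B : Type) (f : A -> seq B) a s :
  word_morph f (a :: s) = f a ++ word_morph f s.
Proof. by []. Qed.

Section MorphicImage.
Variables (A B : Type) (h : A -> seq B) (x : nat -> A).

Definition image_len m := size (word_morph h (mkseq x m)).

Lemma image_lenS m : image_len m.+1 = image_len m + size (h (x m)).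
Proof. by rewrite /image_len mkseqS -cats1 word_morph_cat size_cat /word_morph /= cats0. Qed.

Lemma word_morph_mkseq_prefix m k : m <= k ->
  exists s, word_morph h (mkseq x k) = word_morph h (mkseq x m) ++ s.
Proof.
move=> /subnK <-; elim: (k - m) => [|i [s IH]]; first by exists [::]; rewrite cats0.
exists (s ++ h (x (i + m))).
by rewrite addSn mkseqS -cats1 !word_morph_cat IH -catA /word_morph /= cats0.
Qed.

Lemma image_len_mono : {homo image_len : m k / m <= k}.
Proof.
move=> m k /word_morph_mkseq_prefix [s E].
by rewrite /image_len E size_cat leq_addr.
Qed.

Lemma exists_block n k : n < image_len k ->
  exists m, image_len m <= n < image_len m.+1.
Proof.
elim: k => [|k IH] // n_lt; case: (ltnP n (image_len k)) => [/IH // | le_n].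
by exists k; rewrite le_n.
Qed.

Lemma nth_image_block d m n k : image_len m <= n < image_len m.+1 ->
  n < image_len k ->
  nth d (word_morph h (mkseq x k)) n = nth d (h (x m)) (n - image_len m).
Proof.
move=> /andP [le_m_n lt_n_mS] lt_n_k.
have [s ->] : exists s, word_morph h (mkseq x k) = word_morph h (mkseq x m.+1) ++ s.
  apply: word_morph_mkseq_prefix; rewrite ltnNge.
  by apply: contraTN lt_n_k => /image_len_mono; rewrite -leqNgt; lia.
rewrite nth_cat -[size _]/(image_len m.+1) lt_n_mS mkseqS -cats1 word_morph_cat.
by rewrite nth_cat -[size _]/(image_len m) ltnNge le_m_n /word_morph /= cats0.
Qed.

Lemma morph_image_block y d m n : is_morph_image h x y ->
  image_len m <= n < image_len m.+1 ->
  y n = nth d (h (x m)) (n - image_len m).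
Proof.
move=> y_img block_n; have lt_n_mS : n < image_len m.+1 by case/andP: block_n.
rewrite (y_img _ _ lt_n_mS) (nth_image_block _ block_n lt_n_mS).
by apply: set_nth_default; move: block_n; rewrite image_lenS; lia.
Qed.

Lemma morph_image_exists d (K : nat -> nat) : (forall n, n < image_len (K n)) ->
  is_morph_image h x (fun n => nth d (word_morph h (mkseq x (K n))) n).
Proof.
move=> lt_n_K k n lt_n_k; have [m block_n] := exists_block lt_n_k.
rewrite !(nth_image_block _ block_n) //.
by apply: set_nth_default; move: block_n; rewrite image_lenS; lia.
Qed.

End MorphicImage.

Lemma size_word_morph_uniform (A B : Type) (f : A -> seq B) l s :
  (forall a, size (f a) = l) -> size (word_morph f s) = l * size s.
Proof.
move=> size_f; elim: s => [|a s IH]; first by rewrite muln0.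
by rewrite word_morph_cons size_cat IH size_f mulnS.
Qed.

Lemma nth_word_morph_uniform (A B : Type) (f : A -> seq B) l dA dB s k c :
  (forall a, size (f a) = l) -> c < l -> k < size s ->
  nth dB (word_morph f s) (l * k + c) = nth dB (f (nth dA s k)) c.
Proof.
move=> size_f lt_c_l; elim: s k => [|a s IH] [|k] //= lt_k_s.
  by rewrite word_morph_cons nth_cat size_f muln0 add0n lt_c_l.
by rewrite word_morph_cons nth_cat size_f ltnNge mulnS -addnA leq_addr /= addKn IH.
Qed.

Lemma size_g_img a : size (g_img a) = 2.
Proof. by rewrite /g_img; case: (val a) => [|[|[|]]]. Qed.

Definition g_iter j := iter j (word_morph g_img) [:: ord0].

Lemma g_iterS j : g_iter j.+1 = word_morph g_img (g_iter j).
Proof. by []. Qed.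

Lemma size_g_iter j : size (g_iter j) = 2 ^ j.
Proof.
by elim: j => [|j IH] //; rewrite g_iterS (size_word_morph_uniform _ size_g_img) IH expnS.
Qed.

Lemma g_iter_prefix i j : i <= j -> exists s, g_iter j = g_iter i ++ s.
Proof.
have g_iter_ext k : exists s, g_iter k.+1 = g_iter k ++ s.
  elim: k => [|k [s IH]]; first by exists [:: @L4 1 isT]; apply/eqP.
  by exists (word_morph g_img s); rewrite g_iterS {1}IH word_morph_cat.
move=> /subnK <-; elim: (j - i) => [|k [s IH]]; first by exists [::]; rewrite cats0.
by have [s' ->] := g_iter_ext (k + i); exists (s ++ s'); rewrite IH catA.
Qed.

Lemma nth_g_iter n j : n < 2 ^ j -> nth ord0 (g_iter j) n = g_omega0 n.
Proof.
have stable i k : n < 2 ^ i -> i <= k -> nth ord0 (g_iter k) n = nth ord0 (g_iter i) n.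
  by move=> lt_n le_ik; have [s ->] := g_iter_prefix le_ik; rewrite nth_cat size_g_iter lt_n.
move=> lt_n_2j; rewrite /g_omega0 -/(g_iter n.+1) -(stable j (maxn j n.+1)) ?leq_maxl //.
by rewrite (stable n.+1) ?leq_maxr // (leq_trans (ltn_expl n (isT : 1 < 2))) // leq_exp2l.
Qed.

Lemma g_omega0_double k (b : bool) :
  g_omega0 (2 * k + b) = nth ord0 (g_img (g_omega0 k)) b.
Proof.
have lt_k := ltn_expl k (isT : 1 < 2).
rewrite -(nth_g_iter (j := k.+1)); last by rewrite expnS; case: b; lia.
rewrite -(nth_g_iter lt_k) g_iterS (nth_word_morph_uniform ord0 _ size_g_img) //.
  by case: b.
by rewrite size_g_iter.
Qed.

Definition tm n : bool := val (g_omega0 n) \in [:: 1; 2].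

Lemma tm0 : tm 0 = false.
Proof. by []. Qed.

Lemma tm_double k (b : bool) : tm (2 * k + b) = b (+) tm k.
Proof. by rewrite /tm g_omega0_double; case: (g_omega0 k) => [[|[|[|[|?]]]] ?]; case: b. Qed.

Lemma tm_succ m : tm m.+1 = (val (g_omega0 m) < 2).
Proof.
elim/ltn_ind: m => m IH.
have m_eq : m = 2 * m./2 + odd m by rewrite -[m in LHS]odd_double_half; lia.
move: (odd m) (m./2) m_eq => [] q -> in IH *.
- rewrite (_ : (2 * q + true).+1 = 2 * q.+1 + false); last by lia.
  rewrite tm_double IH; last by lia.
  by rewrite g_omega0_double; case: (g_omega0 q) => [[|[|[|[|?]]]] ?].
- rewrite (_ : (2 * q + false).+1 = 2 * q + true); last by lia.
  rewrite tm_double g_omega0_double /tm.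
  by case: (g_omega0 q) => [[|[|[|[|?]]]] ?].
Qed.

Definition tm_letter (b b' : bool) : 'I_3 :=
  match b, b' with
  | true, false => @L3 0 isT
  | false, true => @L3 2 isT
  | _, _ => @L3 1 isT
  end.

Lemma vtm_tm_letter m : vtm m = tm_letter (tm m) (tm m.+1).
Proof. by rewrite tm_succ /vtm /tm; case: (g_omega0 m) => [[|[|[|[|?]]]] ?]. Qed.

Definition tm_ext k : option bool := if k is k'.+1 then Some (tm k') else None.

Lemma tm_ext_double q k :
  tm_ext (2 * q + k) = omap (addb (~~ odd k)) (tm_ext (q + uphalf k)).
Proof.
case: k => [|k].
  case: q => [|q] //; rewrite !addn0 (_ : 2 * q.+1 = (2 * q + true).+1); last by lia.
  by rewrite /= (tm_double q true).
rewrite addnS /= addnS /= negbK.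
have -> : 2 * q + k = 2 * (q + k./2) + odd k by rewrite -{1}[k]odd_double_half; lia.
by rewrite tm_double.
Qed.

Lemma modn_double_add n b d : (2 * n + b) %% d = (2 * (n %% d) + b) %% d.
Proof. by rewrite -modnDml -modnMmr modnDml. Qed.

Lemma divn_double_add n b d : 0 < d ->
  (2 * n + b) %/ d = 2 * (n %/ d) + (2 * (n %% d) + b) %/ d.
Proof.
move=> d_pos; rewrite {1}(divn_eq n d).
by rewrite (_ : 2 * _ + b = 2 * (n %/ d) * d + (2 * (n %% d) + b)) ?divnMDl //; lia.
Qed.

Section ThueMorseState.
Variables (d : nat) (d_pos : 0 < d).

Definition tm_state n : 'I_d * {ffun 'I_4 -> option bool} :=
  (Ordinal (ltn_pmod n d_pos), [ffun j : 'I_4 => tm_ext (n %/ d + j)]).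

Lemma tm_state_double n1 n2 b : b < 2 -> tm_state n1 = tm_state n2 ->
  tm_state (2 * n1 + b) = tm_state (2 * n2 + b).
Proof.
move=> lt_b2 [] mod_eq /ffunP window_eq.
congr pair; first by apply: val_inj; rewrite /= modn_double_add mod_eq -modn_double_add.
apply/ffunP => j; rewrite !ffunE (divn_double_add n1) // (divn_double_add n2) // mod_eq.
rewrite -(addnA (2 * (n1 %/ d))) -(addnA (2 * (n2 %/ d))) !tm_ext_double.
have carry_le1 : (2 * (n2 %% d) + b) %/ d <= 1.
  by rewrite -ltnS ltn_divLR //; have := ltn_pmod n2 d_pos; lia.
have lt_half : uphalf ((2 * (n2 %% d) + b) %/ d + j) < 4.
  by rewrite uphalf_half; have := ltn_ord j; lia.
by have := window_eq (Ordinal lt_half); rewrite !ffunE /= => ->.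
Qed.

End ThueMorseState.

Section ArithmeticProgression.
Variables (Delta : Type) (h : 'I_3 -> seq Delta).
Local Notation s0 := (size (h (@L3 0 isT))).
Local Notation s1 := (size (h (@L3 1 isT))).
Local Notation s2 := (size (h (@L3 2 isT))).
Local Notation P := (image_len h vtm).
Hypothesis h_AP : s0 + s2 = 2 * s1.

Lemma image_len_vtm m : P m + s0 * tm m = s1 * (m + tm m).
Proof.
elim: m => [|m IH]; first by rewrite tm0 !muln0.
rewrite image_lenS vtm_tm_letter.
by case: (tm m) IH; case: (tm m.+1) => /= IH; lia.
Qed.

Lemma image_len_vtm_bounds m : s1 * m <= P m + s1 /\ P m <= s1 * m + s1.
Proof. by have := image_len_vtm m; case: (tm m) => /=; lia. Qed.

Lemma image_len_vtm_shift m1 m2 : tm m1 = tm m2 -> P m1 + s1 * m2 = P m2 + s1 * m1.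
Proof.
move=> tm_eq; have := image_len_vtm m1; have := image_len_vtm m2.
by rewrite tm_eq; case: (tm m2) => /=; lia.
Qed.

Lemma vtm_block_shift m1 m2 n1 n2 : tm m1 = tm m2 -> tm m1.+1 = tm m2.+1 ->
  n1 + s1 * m2 = n2 + s1 * m1 -> P m1 <= n1 < P m1.+1 ->
  P m2 <= n2 < P m2.+1 /\ n2 - P m2 = n1 - P m1.
Proof.
move=> /image_len_vtm_shift shift /image_len_vtm_shift shiftS n_eq.
rewrite !mulnS in shiftS; case/andP=> le_n1 lt_n1.
by split; [apply/andP; split|]; lia.
Qed.

Lemma ap_middle_gt0 (a : 'I_3) : 0 < size (h a) -> 0 < s1.
Proof.
have [-> | [-> | ->]] : a = @L3 0 isT \/ a = @L3 1 isT \/ a = @L3 2 isT.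
  by case: a => [[|[|[|//]]] ?]; [left | right; left | right; right]; apply: val_inj.
all: lia.
Qed.

Hypothesis s1_pos : 0 < s1.

Lemma lt_image_len_vtm n : n < P n.+2.
Proof. by have [lb _] := image_len_vtm_bounds n.+2; nia. Qed.

Lemma vtm_block_near n m : P m <= n < P m.+1 -> n %/ s1 <= m.+1 <= n %/ s1 + 2.
Proof.
case/andP=> le_n lt_n; have [_ ub] := image_len_vtm_bounds m.+1.
have [lb _] := image_len_vtm_bounds m.
have := divn_eq n s1; have := ltn_pmod n s1_pos; nia.
Qed.

Lemma tm_state_block n1 n2 m1 : tm_state s1_pos n1 = tm_state s1_pos n2 ->
  P m1 <= n1 < P m1.+1 ->
  exists m2, [/\ P m2 <= n2 < P m2.+1, n2 - P m2 = n1 - P m1 & vtm m2 = vtm m1].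
Proof.
case=> mod_eq /ffunP window_eq block1.
have /andP [le_q1 le_m1] := vtm_block_near block1.
pose c := m1.+1 - n1 %/ s1.
(* m2 := m1 + n2 %/ s1 - n1 %/ s1 sees the same t_m, t_(m+1) in the window,
   hence the same letter and, by vtm_block_shift, the same offset. *)
have window j : j <= 1 -> tm_ext (n2 %/ s1 + (c + j)) = Some (tm (m1 + j)).
  move=> le_j1; have lt_j : c + j < 4 by lia.
  have := window_eq (Ordinal lt_j); rewrite !ffunE /= => <-.
  by rewrite (_ : n1 %/ s1 + (c + j) = (m1 + j).+1) //; lia.
have := window 0 isT; rewrite !addn0.
case E: (n2 %/ s1 + c) => [|m2] //= [/esym tm_m].
have := window 1 isT; rewrite addnA E !addn1 /= => [[/esym tm_mS]].
have n_eq : n1 + s1 * m2 = n2 + s1 * m1.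
  by have := divn_eq n1 s1; have := divn_eq n2 s1; rewrite mod_eq; nia.
have [block2 offset] := vtm_block_shift tm_m tm_mS n_eq block1.
by exists m2; split; rewrite // !vtm_tm_letter tm_m tm_mS.
Qed.

End ArithmeticProgression.

Theorem theorem3 (Delta : finType) (h : 'I_3 -> seq Delta)
  (h_nonempty : exists a : 'I_3, h a != [::])
  (h_AP : size (h (@L3 0 isT)) + size (h (@L3 2 isT)) = 2 * size (h (@L3 1 isT))) :
  (exists y : nat -> Delta, is_morph_image h vtm y) /\
  (forall y : nat -> Delta, is_morph_image h vtm y -> automatic2 y).
Proof.
have [a h_a] := h_nonempty.
have s1_pos : 0 < size (h (@L3 1 isT)).
  by apply: (ap_middle_gt0 h_AP (a := a)); rewrite lt0n size_eq0.
have d0 : Delta by case: (h a) h_a => [//|d0 _ _]; exact: d0.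
split.
  exists (fun n => nth d0 (word_morph h (mkseq vtm n.+2)) n).
  exact/morph_image_exists/lt_image_len_vtm.
move=> y y_img; apply: (automatic2_of_congruence (@tm_state_double _ s1_pos)).
move=> n1 n2 same_state.
have [m1 block1] := exists_block (lt_image_len_vtm h_AP s1_pos n1).
have [m2 [block2 offset vtm_eq]] := tm_state_block h_AP same_state block1.
by rewrite (morph_image_block d0 y_img block1) (morph_image_block d0 y_img block2) offset vtm_eq.
Qed.
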